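(* Let $\lambda>0$, $\eta\in(0,1)$, $g_l^*>0$ and let $t\ge 1$ be an integer. For a finite instance set $I$ with real gradients $g_i$, let $V(I)=-\frac{\sum_{i\in I}g_i}{|I|+\lambda}$ and define the clipped leaf value $$V_t(I)=V(I)\cdot\min\left(1,\frac{g_l^*(1-\eta)^{t-1}}{|V(I)|}\right)$$ (with $V_t(I)=0$ if $V(I)=0$). Let $\Delta V_t$ be the supremum of $|V_t(I\cup\{s\})-V_t(I)|$ over all finite instance sets $I$ and instances $s\notin I$ such that all gradients involved satisfy $|g_i|\le g_l^*$. Then $$\Delta V_t\le \min\left(\frac{g_l^*}{1+\lambda},\,2g_l^*(1-\eta)^{t-1}\right).$$
   Context: This is the sensitivity of leaf values in the tree of the $t$-th boosting iteration when gradient-based data filtering (discarding instances with $|g_i|>g_l^*$, where $g_l^*=\max_{y_p\in[-1,1]}|\partial l(y_p,y)/\partial y|_{y=0}|$ for the loss $l$) and geometric leaf clipping (clipping leaf values in magnitude to $g_l^*(1-\eta)^{t-1}$, $\eta$ the shrinkage rate) are applied. *)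

From mathcomp Require Import all_boot all_order all_algebra.
Set Implicit Arguments. Unset Strict Implicit. Unset Printing Implicit Defensive.
Import Order.TTheory GRing.Theory Num.Theory.
Local Open Scope ring_scope.

(* Unclipped leaf value  V(I) = - (sum_{i in I} g_i) / (|I| + lambda),
   for a finite instance set I given as a duplicate-free list of instances. *)
Definition leafV (R : realFieldType) (T : eqType) (lam : R) (g : T -> R)
  (I : seq T) : R :=
  - (\sum_(i <- I) g i) / ((size I)%:R + lam).

Definition clipV (R : realFieldType) (c v : R) : R :=
  if v == 0 then 0 else v * Num.min 1 (c / `|v|).

Definition leafVt (R : realFieldType) (T : eqType) (lam eta gl : R) (t : nat)
  (g : T -> R) (I : seq T) : R :=
  clipV (gl * (1 - eta) ^+ t.-1) (leafV lam g I).

(* Clipping to magnitude c is the projection onto [-c, c]: it is 1-Lipschitz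
   and takes values in [-c, c], so two clipped values differ by at most 2c.
   Adding an instance s to a set I of size n changes the unclipped leaf value
   by (S - g_s (n + lam)) / ((n + lam) (n + 1 + lam)), S the gradient sum over
   I.  With |S| <= n g* and |g_s| <= g* this is at most
   (2n + lam) g* / ((n + lam) (n + 1 + lam)) <= g* / (1 + lam), because
   (n + lam) (n + 1 + lam) - (2n + lam) (1 + lam) = n (n - 1) >= 0 for n in N. *)

From mathcomp Require Import all_boot all_order all_algebra.
From mathcomp Require Import ring lra.
Import Order.TTheory GRing.Theory Num.Theory.
Set Implicit Arguments. Unset Strict Implicit. Unset Printing Implicit Defensive.
Local Open Scope ring_scope.

Section Lipschitz.
Variable R : realDomainType.

Lemma dist_min2l (c x y : R) : `|Num.min c x - Num.min c y| <= `|x - y|.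
Proof.
have [xy|xy] := lerP 0 (x - y);
  rewrite ?(ger0_norm xy) ?(ltr0_norm xy) ler_norml;
  have [cx|cx] := leP c x; have [cy|cy] := leP c y; apply/andP; split; lra.
Qed.

Lemma dist_max2l (c x y : R) : `|Num.max c x - Num.max c y| <= `|x - y|.
Proof.
have [xy|xy] := lerP 0 (x - y);
  rewrite ?(ger0_norm xy) ?(ltr0_norm xy) ler_norml;
  have [cx|cx] := leP x c; have [cy|cy] := leP y c; apply/andP; split; lra.
Qed.
End Lipschitz.

Section Clipping.
Variable R : realFieldType.

Lemma clipVE (c v : R) : 0 <= c -> clipV c v = Num.min c (Num.max (- c) v).
Proof.
move=> c0; rewrite /clipV.
have [->|v0] := eqVneq v 0.
  have nc : - c <= 0 by rewrite oppr_le0.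
  by rewrite (max_idPr nc) (min_idPr c0).
have nv0 : 0 < `|v| by rewrite normr_gt0.
have [vc|cv] := lerP `|v| c.
  have /andP[cv vc'] : - c <= v <= c by rewrite -ler_norml.
  have one_le : 1 <= c / `|v| by rewrite ler_pdivlMr ?mul1r.
  by rewrite (min_idPl one_le) mulr1 (max_idPr cv) (min_idPr vc').
have le_one : c / `|v| <= 1 by rewrite ler_pdivrMr ?mul1r ?ltW.
rewrite (min_idPr le_one) mulrCA.
have [v_ge0|v_lt0] := lerP 0 v.
  rewrite ger0_norm // in cv *.
  have ncv : - c <= v by lra.
  by rewrite mulfV // mulr1 (max_idPr ncv) (min_idPl (ltW cv)).
rewrite ltr0_norm // in cv *.
have vnc : v <= - c by lra.
have ncc : - c <= c by lra.
by rewrite invrN mulrN mulfV // mulrN1 (max_idPl vnc) (min_idPr ncc).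
Qed.

Lemma clipV_lipschitz (c a b : R) : 0 <= c ->
  `|clipV c a - clipV c b| <= `|a - b|.
Proof.
move=> c0; rewrite !clipVE //.
exact: le_trans (dist_min2l _ _ _) (dist_max2l _ _ _).
Qed.

Lemma norm_clipV_le (c v : R) : 0 <= c -> `|clipV c v| <= c.
Proof.
move=> c0; have ncc : - c <= c by lra.
by rewrite clipVE // ler_norml ge_min lexx le_min le_max ncc lexx.
Qed.
End Clipping.

Section LeafValue.
Variables (R : realFieldType) (T : eqType) (lam gl : R) (g : T -> R).

Lemma norm_sum_le_size (I : seq T) : (forall i, i \in I -> `|g i| <= gl) ->
  `|\sum_(i <- I) g i| <= (size I)%:R * gl.
Proof.
elim: I => [|x I IH] gI; first by rewrite big_nil normr0 mul0r.
rewrite big_cons /= -addn1 natrD mulrDl mul1r addrC.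
apply: le_trans (ler_normD _ _) _; apply: lerD.
  by apply: IH => i Ii; apply: gI; rewrite inE Ii orbT.
by apply: gI; rewrite inE eqxx.
Qed.

Lemma leafV_cons_sub (s : T) (I : seq T) : 0 < lam ->
  let n := (size I)%:R in
  leafV lam g (s :: I) - leafV lam g I
    = (\sum_(i <- I) g i - g s * (n + lam)) / ((n + lam) * (n + 1 + lam)).
Proof.
move=> lam_gt0; rewrite /leafV big_cons /= -natr1.
move: (ler0n R (size I)); move: (size I)%:R => n n_ge0.
by field; apply/andP; split; apply: lt0r_neq0; lra.
Qed.

Lemma leafV_cons_sub_le (s : T) (I : seq T) : 0 < lam ->
  (forall i, i \in s :: I -> `|g i| <= gl) ->
  `|leafV lam g (s :: I) - leafV lam g I| <= gl / (1 + lam).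
Proof.
move=> lam_gt0 gsI; rewrite leafV_cons_sub //.
have gs : `|g s| <= gl by apply: gsI; rewrite inE eqxx.
have gl_ge0 : 0 <= gl by apply: le_trans gs.
have := norm_sum_le_size (fun i Ii => gsI i (mem_behead Ii)).
set S := \sum_(i <- I) g i; set n : R := (size I)%:R => S_le.
have n_ge0 : 0 <= n by rewrite ler0n.
have num_le : `|S - g s * (n + lam)| <= n * gl + gl * (n + lam).
  apply: le_trans (ler_normB _ _) _.
  rewrite normrM (gtr0_norm (_ : 0 < n + lam)).
    by apply: lerD => //; apply: ler_wpM2r => //; lra.
  lra.
have denom_le : (2 * n + lam) * (1 + lam) <= (n + lam) * (n + 1 + lam).
  suff : n <= n * n by nra.
  rewrite /n -natrM ler_nat; case: (size I) => // m.
  exact: leq_pmull.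
have den_gt0 : 0 < (n + lam) * (n + 1 + lam) by apply: mulr_gt0; lra.
rewrite normrM normfV (gtr0_norm den_gt0) ler_pdivrMr // mulrAC.
rewrite ler_pdivlMr; last lra.
apply: le_trans (ler_wpM2r _ num_le) _; first lra.
nra.
Qed.
End LeafValue.

Theorem corollary2 (R : realFieldType) (lam eta gl : R) (t : nat)
  (hlam : 0 < lam) (heta0 : 0 < eta) (heta1 : eta < 1) (hgl : 0 < gl)
  (ht : (1 <= t)%N) :
  forall (T : eqType) (g : T -> R) (I : seq T) (s : T),
    uniq I -> s \notin I ->
    (forall i, i \in s :: I -> `|g i| <= gl) ->
    `|leafVt lam eta gl t g (s :: I) - leafVt lam eta gl t g I|
      <= Num.min (gl / (1 + lam)) (2 * gl * (1 - eta) ^+ t.-1).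
Proof.
move=> T g I s _ _ gsI.
set c := gl * (1 - eta) ^+ t.-1.
have c_ge0 : 0 <= c by rewrite mulr_ge0 ?exprn_ge0 //; lra.
rewrite /leafVt -mulrA -/c le_min; apply/andP; split.
  apply: le_trans (clipV_lipschitz _ _ c_ge0) _.
  exact: leafV_cons_sub_le.
apply: le_trans (ler_normB _ _) _.
have := norm_clipV_le (leafV lam g (s :: I)) c_ge0.
have := norm_clipV_le (leafV lam g I) c_ge0.
lra.
Qed.
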